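(* Let $(X,d)$ be a compact metric space without isolated points which has the property*. If $f\in\mathcal{H}(X)$ is topologically stable, then $f$ has the shadowing property and the strict periodic shadowing property; in particular $CR(f)=\overline{Per(f)}$.
   Context: $\mathcal{H}(X)$ is the set of homeomorphisms of $X$; $d_{C^0}(f,g)=\sup_{x}d(f(x),g(x))$ for continuous maps, and $D(f,g)=\max\{d_{C^0}(f,g),d_{C^0}(f^{-1},g^{-1})\}$ for homeomorphisms. $f\in\mathcal{H}(X)$ is topologically stable if for every $\epsilon>0$ there is $\delta>0$ such that for every $g\in\mathcal{H}(X)$ with $D(f,g)<\delta$ there is a continuous $h:X\to X$ with $d_{C^0}(h,\mathrm{id}_X)<\epsilon$ and $h\circ g=f\circ h$. A finite sequence $(x_i)_{i=0}^k$ ($k\ge1$) is a $\delta$-chain if $d(f(x_i),x_{i+1})\le\delta$ for $0\le i\le k-1$, and a $\delta$-cycle if moreover $x_0=x_k$. A sequence $(x_i)_{i\ge0}$ is a $\delta$-pseudo orbit if $d(f(x_i),x_{i+1})\le\delta$ for all $i\ge0$; it is $\epsilon$-shadowed by $x$ if $d(x_i,f^i(x))\le\epsilon$ for all $i\ge0$. $f$ has the shadowing property if for every $\epsilon>0$ there is $\delta>0$ such that every $\delta$-pseudo orbit is $\epsilon$-shadowed by some point. $f$ has the strict periodic shadowing property if for every $\epsilon>0$ there is $\delta>0$ such that for every $\delta$-cycle $(x_i)_{i=0}^m$ ($m\ge1$) there is $p\in X$ with $f^m(p)=p$ and $d(x_i,f^i(p))\le\epsilon$ for $0\le i\le m$.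 $Per(f)$ is the set of periodic points; $CR(f)$ is the set of chain recurrent points, i.e. $x$ such that for every $\delta>0$ there is a $\delta$-cycle $(x_i)_{i=0}^k$ with $x_0=x_k=x$. Property*: for every $\epsilon>0$ there is $\delta>0$ such that for every $n\ge1$ and all proper $n$-tuples $\zeta=(x_1,\dots,x_n),\eta=(y_1,\dots,y_n)\in X^n$ (proper meaning pairwise distinct entries) with $\max_i d(x_i,y_i)<\delta$, there is $\phi\in\mathcal{H}(X)$ with $D(\phi,\mathrm{id}_X)<\epsilon$ and $\phi(x_i)=y_i$ for all $i$. *)

From Stdlib Require Import Reals List.
Open Scope R_scope.

Record MetricSpace := {
  carrier :> Type;
  dist : carrier -> carrier -> R;
  dist_nonneg : forall x y, 0 <= dist x y;
  dist_eq0 : forall x y, dist x y = 0 <-> x = y;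
  dist_sym : forall x y, dist x y = dist y x;
  dist_tri : forall x y z, dist x z <= dist x y + dist y z
}.

Section Metric.
Variable X : MetricSpace.

Definition is_open (U : X -> Prop) : Prop :=
  forall x, U x -> exists r, 0 < r /\ forall y, dist X x y < r -> U y.

Definition compact_space : Prop :=
  forall (I : Type) (U : I -> X -> Prop),
    (forall i, is_open (U i)) ->
    (forall x, exists i, U i x) ->
    exists l : list I, forall x, exists i, In i l /\ U i x.

Definition no_isolated_points : Prop :=
  forall (x : X) (e : R), 0 < e -> exists y, y <> x /\ dist X x y < e.

Definition continuous (f : X -> X) : Prop :=
  forall x e, 0 < e -> exists d, 0 < d /\
    forall y, dist X x y < d -> dist X (f x) (f y) < e.

Definition is_homeo (f finv : X -> X) : Prop :=
  continuous f /\ continuous finv /\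
  (forall x, f (finv x) = x) /\ (forall x, finv (f x) = x).

(** d_{C^0}(f,g) < e, i.e. sup_x d(f x, g x) < e. *)
Definition dC0_lt (f g : X -> X) (e : R) : Prop :=
  exists eta, eta < e /\ forall x, dist X (f x) (g x) <= eta.

Definition D_lt (f finv g ginv : X -> X) (e : R) : Prop :=
  exists eta, eta < e /\
    forall x, dist X (f x) (g x) <= eta /\ dist X (finv x) (ginv x) <= eta.

Definition topologically_stable (f finv : X -> X) : Prop :=
  forall e, 0 < e -> exists d, 0 < d /\
    forall g ginv, is_homeo g ginv -> D_lt f finv g ginv d ->
      exists h : X -> X, continuous h /\ dC0_lt h (fun x => x) e /\
        forall x, h (g x) = f (h x).

Definition proper_tuple (n : nat) (x : nat -> X) : Prop :=
  forall i j, (i < n)%nat -> (j < n)%nat -> i <> j -> x i <> x j.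

Definition property_star : Prop :=
  forall e, 0 < e -> exists d, 0 < d /\
    forall (n : nat) (xs ys : nat -> X), (1 <= n)%nat ->
      proper_tuple n xs -> proper_tuple n ys ->
      (forall i, (i < n)%nat -> dist X (xs i) (ys i) < d) ->
      exists phi phiinv, is_homeo phi phiinv /\
        D_lt phi phiinv (fun x => x) (fun x => x) e /\
        forall i, (i < n)%nat -> phi (xs i) = ys i.

Definition iter (f : X -> X) (n : nat) (x : X) : X := Nat.iter n f x.

Definition pseudo_orbit (f : X -> X) (d : R) (xs : nat -> X) : Prop :=
  forall i, dist X (f (xs i)) (xs (S i)) <= d.

Definition shadowing (f : X -> X) : Prop :=
  forall e, 0 < e -> exists d, 0 < d /\
    forall xs, pseudo_orbit f d xs ->
      exists x, forall i, dist X (xs i) (iter f i x) <= e.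

Definition chain (f : X -> X) (d : R) (k : nat) (xs : nat -> X) : Prop :=
  (1 <= k)%nat /\ forall i, (i < k)%nat -> dist X (f (xs i)) (xs (S i)) <= d.

Definition cycle (f : X -> X) (d : R) (k : nat) (xs : nat -> X) : Prop :=
  chain f d k xs /\ xs O = xs k.

Definition strict_periodic_shadowing (f : X -> X) : Prop :=
  forall e, 0 < e -> exists d, 0 < d /\
    forall m xs, cycle f d m xs ->
      exists p, iter f m p = p /\
        forall i, (i <= m)%nat -> dist X (xs i) (iter f i p) <= e.

Definition periodic (f : X -> X) (p : X) : Prop :=
  exists n, (1 <= n)%nat /\ iter f n p = p.

Definition chain_recurrent (f : X -> X) (x : X) : Prop :=
  forall d, 0 < d -> exists k xs, cycle f d k xs /\ xs O = x /\ xs k = x.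

Definition closure (A : X -> Prop) (x : X) : Prop :=
  forall e, 0 < e -> exists y, A y /\ dist X x y < e.

End Metric.

(* A delta-chain whose points are pairwise distinct is an exact orbit of a
   homeomorphism g = phi o f, where phi is the small homeomorphism provided by
   property* that moves each f(x_i) onto x_(i+1).  Topological stability
   semiconjugates g to f by a map h close to the identity, so h(x_0) is a true
   orbit of f shadowing the chain, and periodic if the chain is a cycle.  As X
   has no isolated points, every chain can be perturbed into one with distinct
   points, which gives finite and strict periodic shadowing; compactness turns
   finite shadowing into shadowing, and strict periodic shadowing approximates
   every chain recurrent point by periodic points. *)
From Pilot Require Import Defs.
From Stdlib Require Import Reals.
Open Scope R_scope.
From Stdlib Require Import Lra Lia Classical ClassicalEpsilon List.
Import Defs.

Lemma fold_right_Rmin_pos {A : Type} (g : A -> R) (l : list A) :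
  (forall a, 0 < g a) ->
  0 < fold_right (fun a m => Rmin (g a) m) 1 l /\
  forall a, In a l -> fold_right (fun a m => Rmin (g a) m) 1 l <= g a.
Proof.
  intros Hg; induction l as [|b l [IHpos IHle]]; simpl.
  - split; [lra | intros a []].
  - split; [now apply Rmin_glb_lt|].
    intros a [<-|Ha]; [apply Rmin_l|].
    eapply Rle_trans; [apply Rmin_r | auto].
Qed.

Lemma fold_right_max_ub {A : Type} (g : A -> nat) (l : list A) a :
  In a l -> (g a <= fold_right (fun a m => Nat.max (g a) m) 0%nat l)%nat.
Proof.
  induction l as [|b l IH]; simpl; [intros []|].
  intros [<-|Ha]; [lia|]. specialize (IH Ha). lia.
Qed.

Section Metric.
Variable X : MetricSpace.

Lemma dist_refl (x : X) : dist X x x = 0.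
Proof. now apply (dist_eq0 X). Qed.

Lemma dist_pos (x y : X) : x <> y -> 0 < dist X x y.
Proof.
  intros Hxy. destruct (dist_nonneg X x y) as [Hpos|Hzero]; auto.
  exfalso. now apply Hxy, (dist_eq0 X).
Qed.

Lemma continuous_comp (F G : X -> X) :
  continuous X F -> continuous X G -> continuous X (fun x => F (G x)).
Proof.
  intros HF HG x e He.
  destruct (HF (G x) e He) as [d1 [Hd1 HF']].
  destruct (HG x d1 Hd1) as [d2 [Hd2 HG']].
  exists d2; auto.
Qed.

Lemma continuous_iter (f : X -> X) n : continuous X f -> continuous X (iter X f n).
Proof.
  intros Hf. induction n as [|n IH].
  - intros x e He. exists e; auto.
  - exact (continuous_comp f (iter X f n) Hf IH).
Qed.

Lemma compact_uniformly_continuous (F : X -> X) :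
  compact_space X -> continuous X F ->
  forall e, 0 < e -> exists d, 0 < d /\
    forall y z, dist X y z < d -> dist X (F y) (F z) < e.
Proof.
  intros Hc HF e He.
  (* Cover X by the balls B(x, r/2), where r is a modulus of continuity at x
     for e/2; the least half-radius of a finite subcover is a uniform modulus. *)
  set (I := {x : X & {r : R | 0 < r /\
             forall y, dist X x y < r -> dist X (F x) (F y) < e / 2}}).
  set (rad := fun i : I => proj1_sig (projT2 i) / 2).
  set (U := fun (i : I) y => dist X (projT1 i) y < rad i).
  destruct (Hc I U) as [l Hl].
  - intros i x Hx. exists (rad i - dist X (projT1 i) x). split; unfold U in *; [lra|].
    intros y Hy. pose proof (dist_tri X (projT1 i) x y). lra.
  - intros x. destruct (HF x (e / 2) ltac:(lra)) as [r [Hr Hx]].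
    exists (existT _ x (exist _ r (conj Hr Hx))).
    unfold U, rad; simpl. rewrite dist_refl. lra.
  - assert (Hrad : forall i, 0 < rad i).
    { intros i. unfold rad. pose proof (proj1 (proj2_sig (projT2 i))). lra. }
    destruct (fold_right_Rmin_pos rad l Hrad) as [Hpos Hle].
    eexists; split; [exact Hpos|].
    intros y z Hyz. destruct (Hl y) as [i [Hi Hyi]]. specialize (Hle i Hi).
    unfold U, rad in *. destruct i as [x [r [Hr Hx]]]; simpl in *.
    pose proof (dist_tri X x y z).
    pose proof (Hx y ltac:(lra)). pose proof (Hx z ltac:(lra)).
    pose proof (dist_tri X (F y) (F x) (F z)) as Htri.
    rewrite (dist_sym X (F y) (F x)) in Htri. lra.
Qed.

Lemma compact_cluster_point (p : nat -> X) :
  compact_space X ->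
  exists q, forall r, 0 < r -> forall N, exists n, (N <= n)%nat /\ dist X q (p n) < r.
Proof.
  intros Hc. apply NNPP; intro Hnone.
  (* Otherwise every point has a ball that p eventually leaves; a finite
     subcover by such balls cannot contain p at a late enough index. *)
  set (I := {q : X & {r : R & {N : nat |
             0 < r /\ forall n, (N <= n)%nat -> r <= dist X q (p n)}}}).
  set (U := fun (i : I) y => dist X (projT1 i) y < projT1 (projT2 i)).
  destruct (Hc I U) as [l Hl].
  - intros i x Hx. exists (projT1 (projT2 i) - dist X (projT1 i) x).
    split; unfold U in *; [lra|].
    intros y Hy. pose proof (dist_tri X (projT1 i) x y). lra.
  - intros x.
    destruct (classic (exists r N, 0 < r /\ forall n, (N <= n)%nat -> r <= dist X x (p n)))
      as [[r [N [Hr HN]]] | Hfreq].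
    + exists (existT _ x (existT _ r (exist _ N (conj Hr HN)))).
      unfold U; simpl. rewrite dist_refl. lra.
    + exfalso; apply Hnone; exists x; intros r Hr N.
      apply NNPP; intro Hfar; apply Hfreq. exists r, N; split; auto.
      intros n Hn. apply Rnot_lt_le; intro Hlt. apply Hfar; eauto.
  - set (N := fold_right (fun a m => Nat.max (proj1_sig (projT2 (projT2 a))) m) 0%nat l).
    destruct (Hl (p N)) as [i [Hi HpN]].
    pose proof (fold_right_max_ub (fun a => proj1_sig (projT2 (projT2 a))) l i Hi).
    pose proof (proj2 (proj2_sig (projT2 (projT2 i))) N ltac:(assumption)).
    unfold U in HpN. lra.
Qed.

Lemma homeo_injective (f finv : X -> X) :
  is_homeo X f finv -> forall x y, f x = f y -> x = y.
Proof.
  intros [_ [_ [_ Hfinvf]]] x y Hxy.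
  now rewrite <- (Hfinvf x), Hxy, Hfinvf.
Qed.

Lemma homeo_comp (f finv g ginv : X -> X) :
  is_homeo X f finv -> is_homeo X g ginv ->
  is_homeo X (fun x => g (f x)) (fun x => finv (ginv x)).
Proof.
  intros [Hf [Hfinv [Hffinv Hfinvf]]] [Hg [Hginv [Hgginv Hginvg]]].
  repeat split; try (now apply continuous_comp); intros x.
  - now rewrite Hffinv, Hgginv.
  - now rewrite Hginvg, Hfinvf.
Qed.

Lemma D_lt_comp_near_id (f finv phi phiinv : X -> X) d rho :
  0 < d ->
  (forall y z, dist X y z < rho -> dist X (finv y) (finv z) < d / 2) ->
  D_lt X phi phiinv (fun x => x) (fun x => x) (Rmin (d / 2) rho) ->
  D_lt X f finv (fun x => phi (f x)) (fun x => finv (phiinv x)) d.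
Proof.
  intros Hd Hfinv [eta [Heta Hphi]].
  pose proof (Rmin_l (d / 2) rho). pose proof (Rmin_r (d / 2) rho).
  exists (d / 2). split; [lra|]. intros x. split.
  - destruct (Hphi (f x)) as [Hfx _]. rewrite dist_sym. lra.
  - destruct (Hphi x) as [_ Hx]. left. apply Hfinv. rewrite dist_sym. lra.
Qed.

Lemma semiconj_chain_orbit (f g h : X -> X) k (ys : nat -> X) :
  (forall x, h (g x) = f (h x)) ->
  (forall i, (i < k)%nat -> g (ys i) = ys (S i)) ->
  forall i, (i <= k)%nat -> h (ys i) = iter X f i (h (ys O)).
Proof.
  intros Hconj Hg. induction i as [|i IH]; intros Hi; [reflexivity|].
  rewrite <- (Hg i), Hconj, IH by lia. reflexivity.
Qed.

Lemma proper_tuple_inj (F : X -> X) n (ys : nat -> X) :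
  (forall x y, F x = F y -> x = y) ->
  proper_tuple X n ys -> proper_tuple X n (fun i => F (ys i)).
Proof. intros HF Hys i j Hi Hj Hij Heq. exact (Hys i j Hi Hj Hij (HF _ _ Heq)). Qed.

Lemma proper_tuple_succ k (ys : nat -> X) :
  proper_tuple X (S k) ys ->
  proper_tuple X k ys /\ proper_tuple X k (fun i => ys (S i)).
Proof. intros Hys; split; intros i j Hi Hj Hij; apply Hys; lia. Qed.

Definition close_cycle (m : nat) (ys : nat -> X) (i : nat) : X :=
  if Nat.eqb i m then ys O else ys i.

Lemma proper_tuple_close_cycle m (ys : nat -> X) :
  (1 <= m)%nat -> proper_tuple X m ys ->
  proper_tuple X m (close_cycle m ys) /\
  proper_tuple X m (fun i => close_cycle m ys (S i)).
Proof.
  intros Hm Hys. unfold close_cycle.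
  split; intros i j Hi Hj Hij.
  - rewrite (proj2 (Nat.eqb_neq i m)), (proj2 (Nat.eqb_neq j m)) by lia. auto.
  - destruct (Nat.eqb_spec (S i) m); destruct (Nat.eqb_spec (S j) m);
      apply Hys; lia.
Qed.

Lemma point_near_avoiding (x : X) r n (ys : nat -> X) :
  no_isolated_points X -> 0 < r ->
  exists y, y <> x /\ dist X x y < r /\ forall i, (i < n)%nat -> y <> ys i.
Proof.
  intros Hni. revert r. induction n as [|n IH]; intros r Hr.
  - destruct (Hni x r Hr) as [y [Hyx Hy]]. exists y. repeat split; auto; lia.
  - destruct (classic (ys n = x)) as [Hn|Hn].
    + destruct (IH r Hr) as [y [Hyx [Hy Havoid]]]. exists y. repeat split; auto.
      intros i Hi. destruct (Nat.eq_dec i n) as [->|]; [congruence | apply Havoid; lia].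
    + pose proof (dist_pos x (ys n) (not_eq_sym Hn)).
      destruct (IH (Rmin r (dist X x (ys n)))) as [y [Hyx [Hy Havoid]]];
        [now apply Rmin_glb_lt|].
      pose proof (Rmin_l r (dist X x (ys n))). pose proof (Rmin_r r (dist X x (ys n))).
      exists y. repeat split; auto; [lra|].
      intros i Hi. destruct (Nat.eq_dec i n) as [->|].
      * intros ->. lra.
      * apply Havoid; lia.
Qed.

Lemma perturb_to_proper_tuple (f : X -> X) eta n (xs : nat -> X) :
  no_isolated_points X -> continuous X f -> 0 < eta ->
  exists ys, proper_tuple X n ys /\ forall i, (i < n)%nat ->
    dist X (xs i) (ys i) < eta /\ dist X (f (xs i)) (f (ys i)) < eta.
Proof.
  intros Hni Hf Heta. induction n as [|n [ys [Hys Hclose]]].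
  - exists xs. split; [intros i j Hi | intros i Hi]; exfalso; lia.
  - destruct (Hf (xs n) eta Heta) as [r [Hr Hfr]].
    destruct (point_near_avoiding (xs n) (Rmin eta r) n ys Hni)
      as [y [_ [Hy Havoid]]]; [now apply Rmin_glb_lt|].
    pose proof (Rmin_l eta r). pose proof (Rmin_r eta r).
    exists (fun i => if Nat.eqb i n then y else ys i). split.
    + intros i j Hi Hj Hij.
      destruct (Nat.eqb_spec i n); destruct (Nat.eqb_spec j n); subst; try lia.
      * apply Havoid; lia.
      * apply not_eq_sym, Havoid; lia.
      * apply Hys; lia.
    + intros i Hi. destruct (Nat.eqb_spec i n) as [->|]; [split; [lra | apply Hfr; lra]|].
      apply Hclose; lia.
Qed.

Lemma dist_perturbed_step (f : X -> X) x x' y y' d eta :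
  dist X (f x) x' <= d -> dist X (f x) (f y) < eta -> dist X x' y' < eta ->
  dist X (f y) y' < d + 2 * eta.
Proof.
  intros Hx Hf Hx'. pose proof (dist_tri X (f y) (f x) y').
  pose proof (dist_tri X (f x) x' y'). rewrite dist_sym in Hf. lra.
Qed.

Definition finite_shadowing (f : X -> X) : Prop :=
  forall e, 0 < e -> exists d, 0 < d /\
    forall k (xs : nat -> X), (forall i, (i < k)%nat -> dist X (f (xs i)) (xs (S i)) <= d) ->
      exists p, forall i, (i <= k)%nat -> dist X (xs i) (iter X f i p) <= e.

Lemma shadowing_of_finite_shadowing (f : X -> X) :
  compact_space X -> continuous X f -> finite_shadowing f -> shadowing X f.
Proof.
  intros Hc Hf Hfin e He.
  destruct (Hfin e He) as [d [Hd Hshadow]].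
  exists d. split; [exact Hd|]. intros xs Hxs.
  destruct (choice (fun n p => forall i, (i <= n)%nat -> dist X (xs i) (iter X f i p) <= e))
    as [p Hp]; [intros n; apply Hshadow; auto|].
  (* A cluster point of the shadowing points of longer and longer segments
     shadows the whole pseudo orbit, by continuity of each iterate. *)
  destruct (compact_cluster_point p Hc) as [q Hq].
  exists q. intros i. apply Rle_plus_epsilon. intros g Hg.
  destruct (continuous_iter f i Hf q g Hg) as [r [Hr Hcont]].
  destruct (Hq r Hr i) as [n [Hin Hqn]].
  specialize (Hcont _ Hqn). specialize (Hp n i Hin).
  pose proof (dist_tri X (xs i) (iter X f i (p n)) (iter X f i q)) as Htri.
  rewrite (dist_sym X (iter X f i (p n))) in Htri. lra.
Qed.

Lemma chain_recurrent_closure_periodic (f : X -> X) x :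
  strict_periodic_shadowing X f -> chain_recurrent X f x -> closure X (periodic X f) x.
Proof.
  intros Hsps Hcr e He.
  destruct (Hsps (e / 2) ltac:(lra)) as [d [Hd Hshadow]].
  destruct (Hcr d Hd) as [k [xs [Hcyc [Hx0 _]]]].
  destruct (Hshadow k xs Hcyc) as [p [Hp Hclose]].
  exists p. split.
  - exists k. split; [apply Hcyc | exact Hp].
  - specialize (Hclose O (Nat.le_0_l k)). rewrite Hx0 in Hclose. simpl in Hclose. lra.
Qed.

Lemma closure_periodic_chain_recurrent (f : X -> X) x :
  continuous X f -> closure X (periodic X f) x -> chain_recurrent X f x.
Proof.
  intros Hf Hcl d Hd.
  destruct (Hf x (d / 2) ltac:(lra)) as [r [Hr Hcont]].
  destruct (Hcl (Rmin r (d / 2))) as [y [[n [Hn Hper]] Hxy]];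
    [apply Rmin_glb_lt; lra|].
  pose proof (Rmin_l r (d / 2)). pose proof (Rmin_r r (d / 2)).
  assert (Hfxy : dist X (f x) (f y) < d / 2) by (apply Hcont; lra).
  assert (Hyx : dist X y x < d / 2) by (rewrite dist_sym; lra).
  (* The orbit of the periodic point y, with both ends moved to x. *)
  set (xs := fun i => if orb (Nat.eqb i O) (Nat.eqb i n) then x else iter X f i y).
  assert (Hx0 : xs O = x) by reflexivity.
  assert (Hxn : xs n = x) by (unfold xs; now rewrite Nat.eqb_refl, Bool.orb_true_r).
  assert (Hmid : forall i, i <> O -> i <> n -> xs i = iter X f i y).
  { intros j Hj0 Hjn. unfold xs.
    now rewrite (proj2 (Nat.eqb_neq j O) Hj0), (proj2 (Nat.eqb_neq j n) Hjn). }
  exists n, xs. split; [split; [split; [exact Hn|] | congruence] | split; assumption].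
  intros i Hi.
  destruct (Nat.eq_dec i O) as [Hi0|Hi0]; destruct (Nat.eq_dec (S i) n) as [Hsn|Hsn].
  - subst i. rewrite Hx0, Hsn, Hxn. rewrite <- Hsn in Hper. change (f y = y) in Hper.
    pose proof (dist_tri X (f x) (f y) x). rewrite Hper in *. lra.
  - subst i. rewrite Hx0, (Hmid 1%nat) by lia. change (iter X f 1 y) with (f y). lra.
  - rewrite (Hmid i) by lia. change (f (iter X f i y)) with (iter X f (S i) y).
    rewrite Hsn, Hxn, Hper. lra.
  - rewrite (Hmid i), (Hmid (S i)) by lia. rewrite dist_refl. lra.
Qed.

End Metric.

Section TopologicallyStable.
Variables (X : MetricSpace) (f finv : X -> X).
Hypothesis compact : compact_space X.
Hypothesis no_isolated : no_isolated_points X.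
Hypothesis star : property_star X.
Hypothesis homeo : is_homeo X f finv.
Hypothesis stable : topologically_stable X f finv.

Lemma proper_chain_shadowing e :
  0 < e -> exists d, 0 < d /\ forall k (ys : nat -> X),
    proper_tuple X k ys -> proper_tuple X k (fun i => ys (S i)) ->
    (forall i, (i < k)%nat -> dist X (f (ys i)) (ys (S i)) < d) ->
    exists p, (forall i, (i <= k)%nat -> dist X (ys i) (iter X f i p) < e) /\
              (ys k = ys O -> iter X f k p = p).
Proof.
  intros He.
  destruct (stable e He) as [dts [Hdts Hconj_exists]].
  destruct (compact_uniformly_continuous X finv compact (proj1 (proj2 homeo)) (dts / 2))
    as [rho [Hrho Hfinv]]; [lra|].
  destruct (star (Rmin (dts / 2) rho)) as [d [Hd Hmove]]; [apply Rmin_glb_lt; lra|].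
  exists d. split; [exact Hd|]. intros k ys Hys Hys' Hchain.
  destruct k as [|k].
  { exists (ys O). split; [|reflexivity].
    intros i Hi. replace i with O by lia. simpl. rewrite dist_refl. exact He. }
  destruct (Hmove (S k) (fun i => f (ys i)) (fun i => ys (S i)))
    as [phi [phiinv [Hphi [Hphi_id Hphi_map]]]];
    [lia | exact (proper_tuple_inj X f _ _ (homeo_injective X f finv homeo) Hys)
    | exact Hys' | exact Hchain |].
  destruct (Hconj_exists (fun x => phi (f x)) (fun x => finv (phiinv x)))
    as [h [_ [[eh [Heh Hh_id]] Hconj]]];
    [exact (homeo_comp X f finv phi phiinv homeo Hphi)
    | exact (D_lt_comp_near_id X f finv phi phiinv dts rho Hdts Hfinv Hphi_id) |].
  pose proof (semiconj_chain_orbit X f _ h (S k) ys Hconj Hphi_map) as Horbit.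
  exists (h (ys O)). split.
  - intros i Hi. rewrite <- Horbit by exact Hi. rewrite dist_sym.
    specialize (Hh_id (ys i)). lra.
  - intros Hcyc. rewrite <- (Horbit (S k) (le_n _)), Hcyc. reflexivity.
Qed.

Lemma stable_finite_shadowing : finite_shadowing X f.
Proof.
  intros e He.
  destruct (proper_chain_shadowing (e / 2)) as [d [Hd Hshadow]]; [lra|].
  exists (d / 4). split; [lra|]. intros k xs Hxs.
  set (eta := Rmin (d / 4) (e / 2)).
  assert (Heta : 0 < eta) by (apply Rmin_glb_lt; lra).
  pose proof (Rmin_l (d / 4) (e / 2)). pose proof (Rmin_r (d / 4) (e / 2)).
  destruct (perturb_to_proper_tuple X f eta (S k) xs no_isolated (proj1 homeo) Heta)
    as [ys [Hys Hclose]].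
  destruct (proper_tuple_succ X k ys Hys) as [Hys_init Hys_tail].
  destruct (Hshadow k ys Hys_init Hys_tail) as [p [Hp _]].
  - intros i Hi.
    destruct (Hclose i ltac:(lia)) as [_ Hfi]. destruct (Hclose (S i) ltac:(lia)) as [Hi' _].
    pose proof (dist_perturbed_step X f _ _ _ _ _ _ (Hxs i Hi) Hfi Hi'). unfold eta in *. lra.
  - exists p. intros i Hi.
    destruct (Hclose i ltac:(lia)) as [Hxy _]. specialize (Hp i Hi).
    pose proof (dist_tri X (xs i) (ys i) (iter X f i p)). unfold eta in *. lra.
Qed.

Lemma stable_strict_periodic_shadowing : strict_periodic_shadowing X f.
Proof.
  intros e He.
  destruct (proper_chain_shadowing (e / 2)) as [d [Hd Hshadow]]; [lra|].
  exists (d / 4). split; [lra|]. intros m xs [[Hm Hxs] Hcyc].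
  set (eta := Rmin (d / 4) (e / 2)).
  assert (Heta : 0 < eta) by (apply Rmin_glb_lt; lra).
  pose proof (Rmin_l (d / 4) (e / 2)). pose proof (Rmin_r (d / 4) (e / 2)).
  destruct (perturb_to_proper_tuple X f eta m xs no_isolated (proj1 homeo) Heta)
    as [ys [Hys Hclose]].
  set (zs := close_cycle X m ys).
  assert (Hzs : forall i, (i <= m)%nat -> dist X (xs i) (zs i) < eta).
  { intros i Hi. unfold zs, close_cycle. destruct (Nat.eqb_spec i m) as [->|].
    - rewrite <- Hcyc. apply Hclose; lia.
    - apply Hclose; lia. }
  assert (Hfzs : forall i, (i < m)%nat -> dist X (f (xs i)) (f (zs i)) < eta).
  { intros i Hi. unfold zs, close_cycle. rewrite (proj2 (Nat.eqb_neq i m)) by lia.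
    apply Hclose, Hi. }
  destruct (proper_tuple_close_cycle X m ys Hm Hys) as [Hzs_init Hzs_tail].
  destruct (Hshadow m zs Hzs_init Hzs_tail) as [p [Hp Hper]].
  - intros i Hi.
    pose proof (dist_perturbed_step X f _ _ _ _ _ _ (Hxs i Hi) (Hfzs i Hi) (Hzs (S i) Hi)).
    unfold eta in *. lra.
  - exists p. split.
    + apply Hper. unfold zs, close_cycle. rewrite Nat.eqb_refl.
      now rewrite (proj2 (Nat.eqb_neq O m)) by lia.
    + intros i Hi. specialize (Hp i Hi). specialize (Hzs i Hi).
      pose proof (dist_tri X (xs i) (zs i) (iter X f i p)). unfold eta in *. lra.
Qed.

End TopologicallyStable.

Theorem theorem1p1 (X : MetricSpace) (f finv : X -> X) :
  compact_space X -> no_isolated_points X -> property_star X ->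
  is_homeo X f finv -> topologically_stable X f finv ->
  shadowing X f /\ strict_periodic_shadowing X f /\
  (forall x, chain_recurrent X f x <-> closure X (periodic X f) x).
Proof.
  intros Hc Hni Hstar Hh Hts.
  assert (Hf : continuous X f) by apply Hh.
  assert (Hsps : strict_periodic_shadowing X f)
    by exact (stable_strict_periodic_shadowing X f finv Hc Hni Hstar Hh Hts).
  split; [|split; [exact Hsps|]].
  - apply shadowing_of_finite_shadowing; [exact Hc | exact Hf |].
    exact (stable_finite_shadowing X f finv Hc Hni Hstar Hh Hts).
  - intros x. split.
    + now apply chain_recurrent_closure_periodic.
    + now apply closure_periodic_chain_recurrent.
Qed.
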